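(* In the parallel-links routing game with homogeneous costs described in the context, suppose either $N=2$ or all $N$ users have equal demands $r^i=R/N$. Let $\alpha^i>0$ with $\sum_i\alpha^i=1$, and let $PoS$ be the ratio of the weighted social cost of the NBS, $\sum_i\alpha^i\tilde g^i$, to the minimum over feasible profiles of the weighted social cost $J^\alpha_{sys}(\mathbf f)=\sum_i\alpha^i\sum_lf^i_lT_l(f_l)$. Then $PoS\le\max_i\alpha^i/\min_i\alpha^i$.
   Context: Parallel-links routing game: users $\mathcal N=\{1,\dots,N\}$ share parallel links $\mathcal L=\{1,\dots,L\}$ from a common source to a common destination; link $l$ has capacity $c_l$. User $i$ has demand $r^i>0$, $R=\sum_ir^i<\sum_lc_l$. A routing strategy of user $i$ is $\mathbf f^i=(f^i_l)_l$ with $f^i_l\ge0$, $\sum_lf^i_l=r^i$; feasible profiles form $\mathbf F$; $f_l=\sum_if^i_l$. Homogeneous costs: $J^i(\mathbf f)=\sum_lf^i_lT_l(f_l)$, each $T_l:[0,\infty)\to[0,\infty)$ strictly increasing, convex, continuously differentiable, with $T_l(f_l)=T(c_l-f_l)$ for $f_l<c_l$ and $T_l(f_l)=\infty$ for $f_l\ge c_l$, for a single link-independent function $T$ with $T(c_l-f_l)$ strictly increasing in $f_l$. NEP: the unique feasible $\hat{\mathbf f}$ in which each user's strategy minimizes its cost given the others'; $\hat J^i=J^i(\hat{\mathbf f})$. Bargaining: $\mathcal G$ is the set of all vectors $\sum_{m=1}^Mp_m(J^1(\mathbf f(m)),\dots,J^N(\mathbf f(m)))$ with $M$ finite, $p_m>0$,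 $\sum p_m=1$, $\mathbf f(m)\in\mathbf F$; the NBS is the unique $\tilde{\mathbf g}$ maximizing $\prod_i(\hat J^i-g^i)$ over $\mathbf g\in\mathcal G$ with $g^i\le\hat J^i$ for all $i$. *)

From HB Require Import structures.
From mathcomp Require Import all_boot all_order all_algebra.
From mathcomp Require Import all_classical all_reals all_analysis.
Set Implicit Arguments. Unset Strict Implicit. Unset Printing Implicit Defensive.
Import Order.TTheory GRing.Theory Num.Theory.
Import numFieldNormedType.Exports.
Local Open Scope classical_set_scope.
Local Open Scope ring_scope.

Section Routing.
Variable R : realType.
Variables N L : nat.

(* A routing profile: f i l = flow of user i on link l. *)
Definition profile := 'I_N -> 'I_L -> R.

Definition linkflow (f : profile) (l : 'I_L) : R := \sum_(i < N) f i l.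

Definition feasible (r : 'I_N -> R) (f : profile) : Prop :=
  (forall i l, 0 <= f i l) /\ (forall i, \sum_(l < L) f i l = r i).

(* all link flows below capacity, i.e. all costs J^i(f) are finite *)
Definition below_cap (c : 'I_L -> R) (f : profile) : Prop :=
  forall l, linkflow f l < c l.

Definition Tl (T : R -> R) (c : 'I_L -> R) (l : 'I_L) (x : R) : R := T (c l - x).

(* J^i(f) = sum_l f^i_l T_l(f_l)  (meaningful when below_cap c f) *)
Definition cost (T : R -> R) (c : 'I_L -> R) (f : profile) (i : 'I_N) : R :=
  \sum_(l < L) f i l * Tl T c l (linkflow f l).

Definition Jsys (T : R -> R) (c : 'I_L -> R) (alpha : 'I_N -> R) (f : profile) : R :=
  \sum_(i < N) alpha i * cost T c f i.

(* Homogeneous-cost hypotheses on T for every link l, on [0, c_l):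
   T_l >= 0, strictly increasing, convex, continuously differentiable
   (derivable on ]0,c_l[ with continuous derivative, which has a finite
   right limit at 0, i.e. extends continuously to [0,c_l)). *)
Definition homogeneous_costs (T : R -> R) (c : 'I_L -> R) : Prop :=
  forall l : 'I_L,
    [/\ forall x, 0 <= x -> x < c l -> 0 <= Tl T c l x,
        forall x y, 0 <= x -> x < y -> y < c l -> Tl T c l x < Tl T c l y,
        forall x y t, 0 <= x -> x < c l -> 0 <= y -> y < c l -> 0 <= t -> t <= 1 ->
          Tl T c l (t * x + (1 - t) * y) <= t * Tl T c l x + (1 - t) * Tl T c l y,
        (forall x, 0 < x -> x < c l -> derivable (Tl T c l) x 1) &
        ({in `]0, c l[, continuous (derive1 (Tl T c l))} /\
         exists d : R, derive1 (Tl T c l) x @[x --> 0^'+] --> d)].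

Definition unilateral (i : 'I_N) (f g : profile) : Prop :=
  forall j, j != i -> g j = f j.

Definition is_NEP T c r (f : profile) : Prop :=
  feasible r f /\ below_cap c f /\
  forall i (g : profile), feasible r g -> below_cap c g -> unilateral i f g ->
    cost T c f i <= cost T c g i.

(* the bargaining set G (restricted to vectors of finite costs) *)
Definition in_G T c r (g : 'I_N -> R) : Prop :=
  exists (M : nat) (p : 'I_M -> R) (fs : 'I_M -> profile),
    [/\ forall m, 0 < p m, \sum_(m < M) p m = 1,
        forall m, feasible r (fs m) /\ below_cap c (fs m) &
        forall i, g i = \sum_(m < M) p m * cost T c (fs m) i].

Definition is_NBS T c r (Jhat : 'I_N -> R) (g : 'I_N -> R) : Prop :=
  [/\ in_G T c r g, (forall i, g i <= Jhat i) &
      forall g', in_G T c r g' -> (forall i, g' i <= Jhat i) ->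
        \prod_(i < N) (Jhat i - g' i) <= \prod_(i < N) (Jhat i - g i)].

Definition is_sys_opt T c r alpha (f : profile) : Prop :=
  feasible r f /\ below_cap c f /\
  forall g, feasible r g -> below_cap c g -> Jsys T c alpha f <= Jsys T c alpha g.

End Routing.

(* max_i alpha^i and min_i alpha^i (N >= 1; the min uses max as neutral) *)
Definition amax (R : realType) (N : nat) (alpha : 'I_N -> R) : R :=
  \big[Num.max/0]_(i < N) alpha i.
Definition amin (R : realType) (N : nat) (alpha : 'I_N -> R) : R :=
  \big[Num.min/amax alpha]_(i < N) alpha i.

(* Let S be the total cost of fopt. Weighting by alpha changes the total cost of
   gtil and of fopt by factors in [amin, amax], so it suffices to show
   \sum_i gtil i <= S.  Put d = (\sum_i Jhat i - S) / N; if d < 0 this follows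
   from gtil <= Jhat.  Otherwise it suffices that the cost vector Jhat - d is
   attained by a feasible profile: its Nash product d ^+ N is then bounded by
   that of the NBS, and AM-GM turns this into \sum_i gtil i <= S.
   With equal demands the first-order conditions of the NEP and T' > 0 force all
   users to route alike, so Jhat is constant and splitting fopt evenly attains
   Jhat - d.  With two users, each NEP cost is bounded by rerouting that user
   into the link flows of fopt; interpolating between the two reroutings splits
   those link flows so that both users gain exactly d. *)

From HB Require Import structures.
From mathcomp Require Import all_boot all_order all_algebra.
From mathcomp Require Import all_classical all_reals all_analysis.
From mathcomp Require Import ring lra.
Import Order.TTheory GRing.Theory Num.Theory.
Import numFieldNormedType.Exports.
Local Open Scope ring_scope.

Set Implicit Arguments. Unset Strict Implicit. Unset Printing Implicit Defensive.

Section Profiles.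
Variables (R : realType) (N L : nat) (T : R -> R) (c : 'I_L -> R) (r : 'I_N -> R).
Implicit Types (f h : profile R N L) (i : 'I_N) (l : 'I_L) (x : 'I_L -> R).

Lemma linkflow_ge0 f l : feasible r f -> 0 <= linkflow f l.
Proof. by move=> [f0 _]; apply: sumr_ge0 => i _. Qed.

Lemma sum_linkflow f : feasible r f -> \sum_l linkflow f l = \sum_i r i.
Proof.
by move=> [_ fr]; rewrite /linkflow exchange_big; apply: eq_bigr => i _.
Qed.

Lemma demand_ge0 f i : feasible r f -> 0 <= r i.
Proof. by move=> [f0 <-]; apply: sumr_ge0 => l _. Qed.

Lemma sum_cost f :
  \sum_i cost T c f i = \sum_l linkflow f l * Tl T c l (linkflow f l).
Proof.
by rewrite /cost exchange_big; apply: eq_bigr => l _; rewrite mulr_suml.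
Qed.

Lemma cost_ge0 f i :
  homogeneous_costs T c -> feasible r f -> below_cap c f -> 0 <= cost T c f i.
Proof.
move=> hc ff bf; apply: sumr_ge0 => l _; apply: mulr_ge0; first by case: ff.
by case: (hc l) => Tl0 _ _ _ _; apply: Tl0; [apply: linkflow_ge0 | apply: bf].
Qed.

Lemma in_G_cost f : feasible r f -> below_cap c f -> in_G T c r (cost T c f).
Proof.
move=> ff bf; exists 1%N, (fun _ => 1), (fun _ => f).
by split=> [//|||i]; rewrite ?big_ord1 ?mul1r.
Qed.

Lemma in_G_ge0 g i : homogeneous_costs T c -> in_G T c r g -> 0 <= g i.
Proof.
move=> hc [M [p [fs [p0 _ ffs ->]]]]; apply: sumr_ge0 => m _.
by apply: mulr_ge0; [apply: ltW | case: (ffs m) => ff bf; apply: cost_ge0].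
Qed.

Definition repl f i x : profile R N L := fun k => if k == i then x else f k.

Lemma linkflow_repl f i x l :
  linkflow (repl f i x) l = linkflow f l - f i l + x l.
Proof.
rewrite /linkflow (bigD1 i) //= [in RHS](bigD1 i) //= /repl eqxx.
rewrite [f i l + _]addrC addrK addrC; congr (_ + _).
by apply: eq_bigr => k /negbTE ->.
Qed.

Lemma feasible_repl f i x : feasible r f ->
  (forall l, 0 <= x l) -> \sum_l x l = r i -> feasible r (repl f i x).
Proof.
move=> [f0 fr] x0 xr; split=> k; rewrite /repl.
  by case: (k == i) => //; apply: f0.
by case: eqP => [->|_]; [exact: xr | exact: fr].
Qed.

Lemma unilateral_repl f i x : unilateral i f (repl f i x).
Proof. by move=> k /negbTE ki; rewrite /repl ki. Qed.

Lemma cost_repl f i x :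
  cost T c (repl f i x) i = \sum_l x l * Tl T c l (linkflow f l - f i l + x l).
Proof. by apply: eq_bigr => l _; rewrite linkflow_repl /repl eqxx. Qed.

Lemma NEP_cost_le_repl fhat i x : is_NEP T c r fhat ->
  (forall l, 0 <= x l) -> \sum_l x l = r i -> below_cap c (repl fhat i x) ->
  cost T c fhat i <= cost T c (repl fhat i x) i.
Proof.
move=> [ff [_ ne]] x0 xr bx.
by apply: ne => //; [apply: feasible_repl | apply: unilateral_repl].
Qed.

End Profiles.

Lemma weighted_ratio_le (R : realType) (N : nat) (alpha g h : 'I_N -> R) :
  (0 < N)%N -> (forall i, 0 < alpha i) ->
  (forall i, 0 <= g i) -> (forall i, 0 <= h i) -> \sum_i g i <= \sum_i h i ->
  (\sum_i alpha i * g i) / (\sum_i alpha i * h i) <= amax alpha / amin alpha.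
Proof.
move=> N0 a0 g0 h0 gh.
have le_amax i : alpha i <= amax alpha by apply: le_bigmax.
have amax0 : 0 < amax alpha by apply: lt_le_trans (a0 (Ordinal N0)) (le_amax _).
have amin0 : 0 < amin alpha by apply: lt_bigmin => // i _; apply: a0.
have [->|ah_neq0] := eqVneq (\sum_i alpha i * h i) 0.
  by rewrite invr0 mulr0 divr_ge0 // ltW.
have ah_gt0 : 0 < \sum_i alpha i * h i.
  rewrite lt_def ah_neq0 /=; apply: sumr_ge0 => i _; exact: mulr_ge0 (ltW _) _.
have upper : \sum_i alpha i * g i <= amax alpha * \sum_i h i.
  apply: le_trans (ler_wpM2l (ltW amax0) gh).
  by rewrite mulr_sumr; apply: ler_sum => i _; rewrite ler_wpM2r.
have lower : amin alpha * \sum_i h i <= \sum_i alpha i * h i.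
  by rewrite mulr_sumr; apply: ler_sum => i _; rewrite ler_wpM2r // bigmin_le.
rewrite ler_pdivrMr // mulrAC ler_pdivlMr //.
apply: le_trans (ler_wpM2r (ltW amin0) upper) _.
by rewrite -mulrA [_ * amin _]mulrC ler_wpM2l // ltW.
Qed.

Lemma prod_le_mean_expn (R : realFieldType) (n : nat) (E : 'I_n -> R) :
  (forall i, 0 <= E i) -> \prod_i E i <= ((\sum_i E i) / n%:R) ^+ n.
Proof.
move=> E0; have := (leif_AGM (A := predT) (fun i _ => E0 i)).1.
by rewrite /= cardE -cardT card_ord.
Qed.

Section Bargaining.
Variables (R : realType) (N L : nat) (T : R -> R) (c : 'I_L -> R) (r : 'I_N -> R).

Definition attainable_shift (J : 'I_N -> R) (d : R) : Prop :=
  exists p : profile R N L,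
    [/\ feasible r p, below_cap c p & forall i, cost T c p i = J i - d].

Lemma NBS_sum_le_shift J g d : (0 < N)%N -> is_NBS T c r J g ->
  0 <= d -> attainable_shift J d -> \sum_i g i <= \sum_i J i - N%:R * d.
Proof.
move=> N0 [_ gJ opt] d0 [p [fp bp cp]].
have pJ i : cost T c p i <= J i by rewrite cp gerBl.
have := opt _ (in_G_cost T fp bp) pJ.
have -> : \prod_i (J i - cost T c p i) = d ^+ N.
  under eq_bigr => i _ do rewrite cp subKr.
  by rewrite prodr_const cardE -cardT card_ord.
have Jg0 i : 0 <= J i - g i by rewrite subr_ge0.
move=> /le_trans /(_ (prod_le_mean_expn Jg0)).
rewrite ler_pXn2r // ?nnegrE ?divr_ge0 ?sumr_ge0 //.
by rewrite ler_pdivlMr ?ltr0n // sumrB mulrC lerBrDr -lerBrDl.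
Qed.

Lemma NBS_sum_le J g S : (0 < N)%N -> is_NBS T c r J g ->
  (0 <= (\sum_i J i - S) / N%:R -> attainable_shift J ((\sum_i J i - S) / N%:R)) ->
  \sum_i g i <= S.
Proof.
move=> N0 nbs shift.
have [d_lt0|d_ge0] := ltP ((\sum_i J i - S) / N%:R) 0.
  have gJ : \sum_i g i <= \sum_i J i by case: nbs => _ gJ _; apply: ler_sum.
  apply: (le_trans gJ); apply: ltW.
  by move: d_lt0; rewrite pmulr_llt0 ?invr_gt0 ?ltr0n // subr_lt0.
have := NBS_sum_le_shift N0 nbs d_ge0 (shift d_ge0).
by rewrite mulrC divfK ?pnatr_eq0 -?lt0n // subKr.
Qed.

End Bargaining.

Lemma exists_le_sum_eq (R : realFieldType) (L : nat) (e : 'I_L -> R) (s : R) :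
  (forall l, 0 <= e l) -> 0 <= s -> s <= \sum_l e l ->
  exists x : 'I_L -> R, (forall l, 0 <= x l <= e l) /\ \sum_l x l = s.
Proof.
move=> e0 s0 se; have [E0|E0] := eqVneq (\sum_l e l) 0.
  exists (fun=> 0); split=> [l|]; first by rewrite lexx e0.
  by rewrite big1 //; apply/eqP; rewrite eq_le s0 -E0 se.
have Epos : 0 < \sum_l e l by rewrite lt_def E0 sumr_ge0.
set q := s / \sum_l e l.
have q0 : 0 <= q by rewrite divr_ge0 // ltW.
have q1 : q <= 1 by rewrite ler_pdivrMr // mul1r.
exists (fun l => q * e l); split=> [l|].
  by rewrite /= mulr_ge0 // ler_piMl.
by rewrite -mulr_sumr divfK.
Qed.

Lemma exists_convex_comb (R : realFieldType) (a b t : R) : b <= t -> t <= a ->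
  exists lam, [/\ 0 <= lam, lam <= 1 & lam * a + (1 - lam) * b = t].
Proof.
move=> bt ta; have [ab|ab] := eqVneq a b.
  exists 1; split=> //; rewrite subrr mul0r addr0 mul1r.
  by apply: le_anti; rewrite ta /= ab bt.
have ba : b < a by rewrite lt_neqAle eq_sym ab /=; apply: le_trans bt ta.
exists ((t - b) / (a - b)); split.
- by apply: divr_ge0; rewrite subr_ge0 // ltW.
- by rewrite ler_pdivrMr ?subr_gt0 // mul1r lerB.
- by field; rewrite subr_eq0.
Qed.

Section NashEquilibrium.
Variables (R : realType) (N L : nat) (T : R -> R) (c : 'I_L -> R) (r : 'I_N -> R).
Hypothesis hc : homogeneous_costs T c.

Lemma Tl_le l x y : 0 <= x -> x <= y -> y < c l -> Tl T c l x <= Tl T c l y.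
Proof.
move=> x0 xy yc; have [->//|xny] := eqVneq x y.
by case: (hc l) => _ Tl_lt _ _ _; rewrite ltW // Tl_lt // lt_def eq_sym xny.
Qed.

(* User i may move its demand into the room that the other users' equilibrium
   flows leave below the link flows of h; doing so cannot pay off. *)
Lemma NEP_cost_le_rerouted (fhat h : profile R N L) i :
  is_NEP T c r fhat -> feasible r h -> below_cap c h ->
  exists x : 'I_L -> R,
    [/\ forall l, 0 <= x l <= linkflow h l, \sum_l x l = r i &
        cost T c fhat i <= \sum_l x l * Tl T c l (linkflow h l)].
Proof.
move=> ne fh bh; have [ff [bf _]] := ne; set F := linkflow h.
pose y l := linkflow fhat l - fhat i l.
have y0 l : 0 <= y l.
  rewrite /y /linkflow (bigD1 i) //= addrAC subrr add0r.
  by apply: sumr_ge0 => j _; case: ff.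
pose e l := Num.max (F l - y l) 0.
have e0 l : 0 <= e l by rewrite le_max lexx orbT.
have eF l : e l <= F l by rewrite ge_max gerBl // y0 (linkflow_ge0 _ fh).
have ri : r i <= \sum_l e l.
  apply: le_trans (_ : \sum_l (F l - y l) <= _); last first.
    by apply: ler_sum => l _; rewrite le_max lexx.
  rewrite sumrB /y sumrB (sum_linkflow fh) (sum_linkflow ff); case: ff => _ ->.
  by rewrite opprB addrC subrK.
have [x [xe sx]] := exists_le_sum_eq e0 (demand_ge0 i ff) ri.
have x0 l : 0 <= x l by case/andP: (xe l).
have x_eq0 l : ~~ (0 < x l) -> x l = 0.
  by rewrite -leNgt => xl; apply: le_anti; rewrite xl x0.
have room l : 0 < x l -> y l + x l <= F l.
  move=> xl; have /andP[_ xel] := xe l.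
  have /max_idPl eE : 0 <= F l - y l.
    by move: (lt_le_trans xl xel); rewrite lt_max ltxx orbF => /ltW.
  by rewrite addrC -lerBrDr -eE.
exists x; split=> // [l|]; first by rewrite x0 (le_trans _ (eF l)) //; case/andP: (xe l).
have bg : below_cap c (repl fhat i x).
  move=> l; rewrite linkflow_repl -/(y l); have [xl|/x_eq0->] := boolP (0 < x l).
    exact: le_lt_trans (room l xl) (bh l).
  by rewrite addr0; apply: le_lt_trans (bf l); rewrite gerBl; case: ff.
apply: le_trans (NEP_cost_le_repl ne x0 sx bg) _.
rewrite cost_repl; apply: ler_sum => l _; rewrite -/(y l).
have [xl|/x_eq0->] := boolP (0 < x l); last by rewrite !mul0r.
apply: ler_wpM2l; first exact: x0.
by apply: Tl_le; [rewrite addr_ge0 | exact: room | exact: bh].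
Qed.

End NashEquilibrium.

Definition split2 (R : realType) (L : nat) (u v : 'I_L -> R) : profile R 2 L :=
  fun j => if j == ord0 then u else v.

Lemma ord2_neq0 (j : 'I_2) : j != ord0 -> j = lift ord0 ord0.
Proof. by case: j => [[|[|m]]] // Hj _; apply: val_inj. Qed.

Section TwoUsers.
Variables (R : realType) (L : nat) (T : R -> R) (c : 'I_L -> R) (r : 'I_2 -> R).
Hypothesis hc : homogeneous_costs T c.

Lemma linkflow_split2 (u v : 'I_L -> R) l : linkflow (split2 u v) l = u l + v l.
Proof. by rewrite /linkflow big_ord_recl big_ord1. Qed.

Lemma feasible_split2 (F u : 'I_L -> R) :
  \sum_l F l = r ord0 + r (lift ord0 ord0) ->
  (forall l, 0 <= u l <= F l) -> \sum_l u l = r ord0 ->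
  feasible r (split2 u (fun l => F l - u l)).
Proof.
move=> sF uF su; split=> j; rewrite /split2; case: eqP => [j0|/eqP/ord2_neq0 j1].
- by move=> l; case/andP: (uF l).
- by move=> l; case/andP: (uF l) => _; rewrite subr_ge0.
- by rewrite j0.
- by rewrite j1 sumrB sF su addrC addKr.
Qed.

Lemma cost_split2 (F u : 'I_L -> R) i :
  cost T c (split2 u (fun l => F l - u l)) i
  = \sum_l (if i == ord0 then u l else F l - u l) * Tl T c l (F l).
Proof.
by apply: eq_bigr => l _; rewrite linkflow_split2 addrC subrK /split2; case: (i == ord0).
Qed.

Lemma two_user_attainable_shift (fhat h : profile R 2 L) :
  is_NEP T c r fhat -> feasible r h -> below_cap c h ->
  0 <= (\sum_i cost T c fhat i - \sum_i cost T c h i) / 2%:R ->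
  attainable_shift T c r (cost T c fhat)
    ((\sum_i cost T c fhat i - \sum_i cost T c h i) / 2%:R).
Proof.
move=> ne fh bh; set S := \sum_i cost T c h i; set d := _ / _ => d0.
set F := linkflow h.
have [x0 [x0F sx0]] := NEP_cost_le_rerouted hc ord0 ne fh bh.
set A := \sum_l _ => A0.
have [x1 [x1F sx1]] := NEP_cost_le_rerouted hc (lift ord0 ord0) ne fh bh.
set B := \sum_l _ => A1.
have SF : S = \sum_l F l * Tl T c l (F l) by rewrite /S sum_cost.
have dE : cost T c fhat ord0 + cost T c fhat (lift ord0 ord0) - S = 2%:R * d.
  by rewrite /d big_ord_recl big_ord1 mulrC divfK ?pnatr_eq0.
have [lam [lam0 lam1 lamE]] : exists lam, [/\ 0 <= lam, lam <= 1 &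
    lam * A + (1 - lam) * (S - B) = cost T c fhat ord0 - d].
  apply: exists_convex_comb; first by move: A1 dE d0; lra.
  by move: A0 d0; lra.
pose u l := lam * x0 l + (1 - lam) * (F l - x1 l).
have uF l : 0 <= u l <= F l.
  case/andP: (x0F l) => x00 x0Fl; case/andP: (x1F l) => x10 x1Fl.
  apply/andP; split; first by rewrite addr_ge0 // mulr_ge0 // subr_ge0.
  apply: le_trans (_ : lam * F l + (1 - lam) * F l <= F l); last by lra.
  by rewrite lerD // ler_wpM2l ?subr_ge0 // gerBl.
have sF : \sum_l F l = r ord0 + r (lift ord0 ord0).
  by rewrite /F (sum_linkflow fh) big_ord_recl big_ord1.
have su : \sum_l u l = r ord0.
  rewrite /u big_split /= -!mulr_sumr sumrB sx0 sx1 sF; ring.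
have cost_u : \sum_l u l * Tl T c l (F l) = cost T c fhat ord0 - d.
  rewrite -lamE SF /A /B /u -sumrB !mulr_sumr -big_split /=.
  by apply: eq_bigr => l _; ring.
exists (split2 u (fun l => F l - u l)); split=> [||i]; first exact: feasible_split2.
- by move=> l; rewrite linkflow_split2 addrC subrK; apply: bh.
- rewrite cost_split2; have [->|i0] := eqVneq i ord0; first exact: cost_u.
  rewrite (ord2_neq0 i0); under eq_bigr do rewrite mulrBl.
  by rewrite sumrB -SF cost_u; move: dE; lra.
Qed.

End TwoUsers.

Section RightDerivatives.
Variable R : realType.
Local Open Scope classical_set_scope.

Lemma derivable_quotient_cvg (f : R -> R) (x v : R) : derivable f x 1 ->
  t^-1 * (f (t * v + x) - f x) @[t --> 0^'+] --> v * 'D_1 f x.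
Proof.
move=> /derivable1_diffP df; have dv : derivable f x v by apply: diff_derivable.
have -> : v * 'D_1 f x = 'D_v f x.
  by rewrite !deriveE // -{2}(mulr1 v) -[v * 1]/(v *: 1) linearZ.
have right_dnbhs : 0^'+ `=>` (0^' : set_system R).
  by apply: within_subset => t /= /gt_eqF ->.
exact: cvg_trans (cvg_app _ right_dnbhs) dv.
Qed.

Lemma quotient_cvg (f : R -> R) (x v : R) : (v != 0 -> derivable f x 1) ->
  t^-1 * (f (t * v + x) - f x) @[t --> 0^'+] --> v * 'D_1 f x.
Proof.
move=> df; have [->|v0] := eqVneq v 0; last exact: derivable_quotient_cvg (df v0).
have -> : (fun t : R => t^-1 * (f (t * 0 + x) - f x)) = fun=> 0.
  by apply/funext => t; rewrite mulr0 add0r subrr mulr0.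
by rewrite mul0r; apply: cvg_cst.
Qed.

(* The derivative at x dominates the slope of the chord from 0 to x, which is
   positive by strict monotonicity. *)
Lemma increasing_convex_derive_gt0 (f : R -> R) (x b : R) :
  0 < x -> x < b -> derivable f x 1 ->
  (forall y z, 0 <= y -> y < z -> z < b -> f y < f z) ->
  (forall y z t, 0 <= y -> y < b -> 0 <= z -> z < b -> 0 <= t -> t <= 1 ->
     f (t * y + (1 - t) * z) <= t * f y + (1 - t) * f z) ->
  0 < 'D_1 f x.
Proof.
move=> x0 xb df inc conv; have b0 : 0 < b by apply: lt_trans xb.
set s := (f x - f 0) / x.
have s0 : 0 < s by rewrite divr_gt0 // subr_gt0 inc.
suff : - 1 * 'D_1 f x <= - s by rewrite mulN1r lerN2 => /(lt_le_trans s0).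
apply: cvgr_to_le (derivable_quotient_cvg (v := -1) df) _; near=> t.
have t0 : 0 < t by near: t; apply: nbhs_right_gt.
have tx : t < x by near: t; apply: nbhs_right_lt.
set lam := 1 - t / x.
have lam0 : 0 <= lam by rewrite subr_ge0 ler_pdivrMr // mul1r ltW.
have lam1 : lam <= 1 by rewrite gerBl divr_ge0 // ltW.
have := conv x 0 lam (ltW x0) xb (lexx 0) b0 lam0 lam1.
have -> : lam * x + (1 - lam) * 0 = t * -1 + x.
  by rewrite mulr0 addr0 /lam mulrBl mul1r divfK ?gt_eqF // mulrN1 addrC.
have -> : lam * f x + (1 - lam) * f 0 = f x + t * - s.
  by rewrite /lam /s; field; rewrite gt_eqF.
by rewrite -lerBlDl => H; rewrite ler_pdivrMl.
Unshelve. all: by end_near.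
Qed.

Lemma near_right0_lt (x v b : R) : x < b -> \forall t \near 0^'+, t * v + x < b.
Proof.
move=> xb; have e0 : 0 < (b - x) / (`|v| + 1) by rewrite divr_gt0 ?subr_gt0 ?ltr_wpDl.
near=> t.
have t0 : 0 < t by near: t; apply: nbhs_right_gt.
have te : t < (b - x) / (`|v| + 1) by near: t; apply: nbhs_right_lt.
rewrite -ltrBrDr; apply: le_lt_trans (_ : t * (`|v| + 1) < b - x).
  by rewrite ler_pM2l // ler_wpDr // ler_norm.
by rewrite -ltr_pdivlMr // ltr_wpDl.
Unshelve. all: by end_near.
Qed.

End RightDerivatives.

Section NashFirstOrder.
Variables (R : realType) (N L : nat) (T : R -> R) (c : 'I_L -> R) (r : 'I_N -> R).
Hypothesis hc : homogeneous_costs T c.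
Local Open Scope classical_set_scope.

(* The sum is the right derivative at 0 of the cost of user i deviating to
   fhat i + t v. *)
Lemma NEP_first_order (fhat : profile R N L) i (v : 'I_L -> R) :
  is_NEP T c r fhat -> \sum_l v l = 0 ->
  (forall t l, 0 <= t -> t <= 1 -> 0 <= fhat i l + t * v l) ->
  (forall l, v l != 0 -> 0 < linkflow fhat l) ->
  0 <= \sum_l v l * (Tl T c l (linkflow fhat l)
                     + fhat i l * 'D_1 (Tl T c l) (linkflow fhat l)).
Proof.
move=> ne v0 av Fv; have [ff [bf _]] := ne; set F := linkflow fhat; set a := fhat i.
pose Q l t := t^-1 * (Tl T c l (t * v l + F l) - Tl T c l (F l)).
pose Phi t := \sum_l (v l * Tl T c l (F l) + (t * v l + a l) * Q l t).
have cap : \forall t \near 0^'+, forall l, t * v l + F l < c l.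
  by apply: filter_forall => l; apply: near_right0_lt; apply: bf.
have Phi0 : \forall t \near 0^'+, 0 <= Phi t.
  near=> t.
  have t0 : 0 < t by near: t; apply: nbhs_right_gt.
  have t1 : t < 1 by near: t; apply: nbhs_right_lt.
  pose x l := a l + t * v l.
  have lx l : F l - a l + x l = t * v l + F l by rewrite /x; ring.
  have x0 l : 0 <= x l by apply: av; rewrite ltW.
  have sx : \sum_l x l = r i.
    by rewrite big_split /= -mulr_sumr v0 mulr0 addr0; case: ff => _ ->.
  have capt : forall l, t * v l + F l < c l by near: t; apply: cap.
  have bx : below_cap c (repl fhat i x).
    by move=> l; rewrite linkflow_repl -/F -/a lx capt.
  have E : cost T c (repl fhat i x) i - cost T c fhat i = t * Phi t.
    rewrite cost_repl /cost -sumrB /Phi mulr_sumr; apply: eq_bigr => l _.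
    by rewrite -/F -/a lx /Q /x; field; rewrite gt_eqF.
  by have := NEP_cost_le_repl ne x0 sx bx; rewrite -subr_ge0 E pmulr_rge0.
have cQ l : Q l t @[t --> 0^'+] --> v l * 'D_1 (Tl T c l) (F l).
  apply: quotient_cvg => /Fv Fl.
  by case: (hc l) => _ _ _ Tl_der _; apply: Tl_der => //; apply: bf.
have ct : t @[t --> 0^'+] --> (0 : R) by apply: cvg_at_right_filter; apply: cvg_id.
have cPhi : Phi t @[t --> 0^'+]
    --> \sum_l (v l * Tl T c l (F l) + (0 * v l + a l) * (v l * 'D_1 (Tl T c l) (F l))).
  apply: cvg_big => [|l _]; first exact: add_continuous.
  apply: cvgD; first exact: cvg_cst.
  by apply: cvgM (cQ l); apply: cvgD; [apply: cvgMr_tmp | apply: cvg_cst].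
rewrite (_ : \sum_l _ = \sum_l (v l * Tl T c l (F l)
                          + (0 * v l + a l) * (v l * 'D_1 (Tl T c l) (F l)))).
  exact: cvgr_to_ge cPhi Phi0.
by apply: eq_bigr => l _; ring.
Unshelve. all: by end_near.
Qed.

(* Two users with equal demands at an NEP: adding the first-order conditions
   for shifting flow from one strategy towards the other gives
   \sum_l (b l - a l) ^+ 2 * T'_l (F l) <= 0, and T'_l > 0 where flow moves. *)
Lemma NEP_equal_demand_flows (fhat : profile R N L) i j :
  is_NEP T c r fhat -> r i = r j -> fhat i =1 fhat j.
Proof.
move=> ne rij; have [[f0 fr] [bf _]] := ne.
set F := linkflow fhat; pose d l := fhat j l - fhat i l.
pose D l := 'D_1 (Tl T c l) (F l).
have le_F k l : fhat k l <= F l.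
  by rewrite /F /linkflow (bigD1 k) //= lerDl sumr_ge0.
have Fd l : d l != 0 -> 0 < F l.
  apply: contraNT; rewrite -leNgt => F0.
  have z k : fhat k l = 0 by apply: le_anti; rewrite f0 andbT (le_trans (le_F k l) F0).
  by rewrite /d !z subrr.
have sd : \sum_l d l = 0 by rewrite sumrB !fr rij subrr.
have conv k k' t l : 0 <= t -> t <= 1 -> 0 <= fhat k l + t * (fhat k' l - fhat k l).
  move=> t0 t1; rewrite (_ : _ + _ = (1 - t) * fhat k l + t * fhat k' l); last by ring.
  by rewrite addr_ge0 // mulr_ge0 // subr_ge0.
have hi := NEP_first_order (i := i) ne sd (conv i j) Fd.
have sd' : \sum_l (fhat i l - fhat j l) = 0 by rewrite sumrB !fr rij subrr.
have Fd' l : fhat i l - fhat j l != 0 -> 0 < F l.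
  by move=> dl; apply: Fd; rewrite /d -opprB oppr_eq0.
have hj := NEP_first_order (i := j) ne sd' (conv j i) Fd'.
have Dpos l : d l != 0 -> 0 < D l.
  move=> dl; have [_ inc conv' Tl_der _] := hc l.
  apply: increasing_convex_derive_gt0 inc conv'; [exact: Fd | exact: bf |].
  by apply: Tl_der; [apply: Fd | apply: bf].
have sq0 l : 0 <= d l ^+ 2 * D l.
  have [->|dl] := eqVneq (d l) 0; first by rewrite expr0n mul0r.
  by rewrite mulr_ge0 ?sqr_ge0 // ltW // Dpos.
have sum0 : \sum_l d l ^+ 2 * D l = 0.
  apply/eqP; rewrite eq_le (sumr_ge0 _ (fun l _ => sq0 l)) andbT.
  rewrite -oppr_ge0 -sumrN; apply: le_trans (addr_ge0 hi hj) _.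
  rewrite -big_split le_eqVlt; apply/orP; left; apply/eqP.
  by apply: eq_bigr => l _; rewrite /= /d /D /F; ring.
move=> l; apply/esym/eqP; rewrite -subr_eq0 -/(d l); apply: contraT => dl.
have /(_ l isT)/eqP := psumr_eq0P (fun l _ => sq0 l) sum0.
by rewrite mulf_eq0 expf_eq0 (negbTE dl) andbF /= gt_eqF // Dpos.
Qed.

Lemma NEP_equal_demand_cost (fhat : profile R N L) i j :
  is_NEP T c r fhat -> r i = r j -> cost T c fhat i = cost T c fhat j.
Proof.
by move=> ne rij; apply: eq_bigr => l _; rewrite (NEP_equal_demand_flows ne rij).
Qed.

End NashFirstOrder.

Lemma equal_demand_attainable_shift (R : realType) (N L : nat) (T : R -> R)
    (c : 'I_L -> R) (r : 'I_N -> R) (fhat h : profile R N L) :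
  homogeneous_costs T c -> (0 < N)%N -> (forall i, r i = (\sum_j r j) / N%:R) ->
  is_NEP T c r fhat -> feasible r h -> below_cap c h ->
  attainable_shift T c r (cost T c fhat)
    ((\sum_i cost T c fhat i - \sum_i cost T c h i) / N%:R).
Proof.
move=> hc N0 req ne fh bh; have Nn0 : N%:R != 0 :> R by rewrite pnatr_eq0 -lt0n.
have J_eq i : cost T c fhat i = cost T c fhat (Ordinal N0).
  by apply: (NEP_equal_demand_cost hc ne); rewrite !req.
pose p : profile R N L := fun _ l => linkflow h l / N%:R.
have lp l : linkflow p l = linkflow h l.
  by rewrite [linkflow p l]/linkflow /p sumr_const card_ord -[_ *+ N]mulr_natr divfK.
exists p; split=> [|l|i].
- split=> [i l|i]; first by rewrite divr_ge0 // (linkflow_ge0 _ fh).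
  by rewrite -mulr_suml (sum_linkflow fh) -(req i).
- by rewrite lp bh.
- have -> : cost T c p i = (\sum_k cost T c h k) / N%:R.
    rewrite sum_cost mulr_suml; apply: eq_bigr => l _.
    by rewrite lp /p mulrAC.
  rewrite (eq_bigr _ (fun k _ => J_eq k)) sumr_const card_ord -mulr_natl (J_eq i).
  by field.
Qed.

Theorem corollary3p1 (R : realType) (N L : nat)
    (c : 'I_L -> R) (r : 'I_N -> R) (T : R -> R) (alpha : 'I_N -> R)
    (fhat : profile R N L) (gtil : 'I_N -> R) (fopt : profile R N L) :
  (forall l, 0 < c l) ->
  (forall i, 0 < r i) ->
  \sum_(i < N) r i < \sum_(l < L) c l ->
  homogeneous_costs T c ->
  (N = 2%N \/ forall i, r i = (\sum_(j < N) r j) / N%:R) ->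
  (forall i, 0 < alpha i) ->
  \sum_(i < N) alpha i = 1 ->
  is_NEP T c r fhat ->
  is_NBS T c r (cost T c fhat) gtil ->
  is_sys_opt T c r alpha fopt ->
  (\sum_(i < N) alpha i * gtil i) / Jsys T c alpha fopt <= amax alpha / amin alpha.
Proof.
move=> _ _ _ hc users alpha0 alpha1 ne nbs [fo [bo _]].
have N0 : (0 < N)%N.
  have [N0|//] := posnP N.
  have alpha_sum0 : \sum_(i < N) alpha i = 0.
    by apply: big1 => i _; exfalso; have := ltn_ord i; rewrite {2}N0.
  by move/eqP: alpha1; rewrite alpha_sum0 eq_sym oner_eq0.
have gS : \sum_i gtil i <= \sum_i cost T c fopt i.
  apply: (NBS_sum_le N0 nbs) => d0.
  case: users => [N2|req]; last exact: equal_demand_attainable_shift hc N0 req ne fo bo.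
  by subst N; apply: two_user_attainable_shift.
apply: weighted_ratio_le => // i; last exact: cost_ge0 hc fo bo.
by case: nbs => Gg _ _; apply: in_G_ge0 hc Gg.
Qed.
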